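(* Let $h,u,q$ be positive integers with $h\equiv 2$ or $4\pmod 6$, $u\equiv 0\pmod 3$, $u\ge 6$, and $q$ not divisible by $3$. Suppose there exists a $(u+1)$-GDD of type $q^{u+1}$. Call a positive integer $d$ admissible if $d\equiv h\pmod 3$ and $d\le h(u-1)/2$, and suppose that for every admissible $d$ there exists a 4-GDD of type $h^u d^1$; let $d_{\min}$ be the smallest admissible $d$. Then there exists a 4-GDD of type $(hq)^u m^1$ for every integer $m\equiv hq\pmod 3$ with $q\,d_{\min}\le m\le qh(u-1)/2$.
   Context: For a set $K$ of positive integers, a $K$-GDD (group divisible design) is a triple $(V,\mathcal G,\mathcal B)$ where $V$ is a finite set, $\mathcal G$ is a partition of $V$ into subsets called groups, $\mathcal B$ is a nonempty collection of subsets of $V$ (blocks) with sizes in $K$, such that every pair of points from distinct groups lies in exactly one block and no pair of points from the same group lies in any block. A $k$-GDD means a $\{k\}$-GDD. The type $g_1^{u_1}\cdots g_r^{u_r}$ means exactly $u_i$ groups of size $g_i$ for each $i$; type $h^u d^1$ means $u$ groups of size $h$ and one group of size $d$. *)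

From mathcomp Require Import all_boot.
Set Implicit Arguments. Unset Strict Implicit. Unset Printing Implicit Defensive.

Definition is_GDD (n : nat) (K : pred nat) (G : {set {set 'I_n}})
    (B : seq {set 'I_n}) : Prop :=
  [/\ partition G [set: 'I_n],
      B != [::],
      all (fun b : {set 'I_n} => #|b| \in K) B &
      forall x y : 'I_n, x != y ->
        count (fun b : {set 'I_n} => (x \in b) && (y \in b)) B
          = (pblock G x != pblock G y) :> nat ].

Definition GDD_exists (K : pred nat) (ty : seq nat) : Prop :=
  exists (n : nat) (G : {set {set 'I_n}}) (B : seq {set 'I_n}),
    is_GDD K G B /\ perm_eq [seq #|A| | A : {set 'I_n} <- enum G] ty.

Definition admissible (h u d : nat) : bool :=
  [&& 0 < d, d == h %[mod 3] & 2 * d <= h * (u - 1)].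

From mathcomp Require Import all_boot zify.
From Stdlib Require Import IndefiniteDescription.
Set Implicit Arguments. Unset Strict Implicit. Unset Printing Implicit Defensive.

(* Wilson's fundamental construction.  View the (u+1)-GDD of type q^(u+1) as a
   transversal design on 'I_(u+1) x 'I_q, each of its blocks meeting every group
   exactly once.  Give the points of groups 1..u weight h and the j-th point of
   group 0 weight d_j, then replace every point by as many copies as its weight
   and every block by a 4-GDD of type h^u d_j on the copies of its points.  The
   result is a 4-GDD of type (hq)^u (d_1 + ... + d_q).  It remains to write m as a
   sum of q admissible d_j: every value between dmin and h(u-1)/2 congruent to
   dmin mod 3 is admissible, and any m in [q dmin, q h(u-1)/2] of the right
   residue splits greedily into q such values. *)

Lemma map_const (T U : Type) (e : U) (s : seq T) : [seq e | _ <- s] = nseq (size s) e.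
Proof. by elim: s => //= _ s ->. Qed.

Lemma perm_map_lift (T U : eqType) (f : T -> U) (l : seq T) (s : seq U) :
  perm_eq (map f l) s -> exists2 l', perm_eq l l' & map f l' = s.
Proof.
elim: s l => [|a s IH] l fl_s.
  by exists l => //; move/perm_size: fl_s; rewrite size_map; case: l.
have /mapP [x xl fx_a] : a \in map f l by rewrite (perm_mem fl_s) mem_head.
subst a.
have frem_s : perm_eq (map f (rem x l)) s.
  rewrite -(perm_cons (f x)); apply: perm_trans fl_s.
  by rewrite perm_sym (perm_map f (perm_to_rem xl)).
have [l'' rem_l'' <-] := IH _ frem_s.
by exists (x :: l'') => //; rewrite (perm_trans (perm_to_rem xl)) ?perm_cons.
Qed.

Lemma exists_seq_sumn_mod (r a b q m : nat) :
  a <= b -> b = a %[mod r] -> q * a <= m <= q * b -> m = q * a %[mod r] ->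
  exists s, [/\ size s = q, sumn s = m &
                all (fun v => (a <= v <= b) && (v == a %[mod r])) s].
Proof.
move=> ab ba; elim: q m => [|q IH] m /andP [lo hi] m_mod.
  by exists [::]; move: hi; rewrite mul0n leqn0 => /eqP ->.
(* The clears keep lia from zifying the [%[mod r]] facts, on which it diverges. *)
have qa_le_m : q * a <= m by clear -lo; lia.
(* Greedy: if the first part cannot absorb all of m beyond q * a, it takes b. *)
have [small | large] := leqP (m - q * a) b.
  exists (m - q * a :: nseq q a); split=> /=; first by rewrite size_nseq.
    by rewrite sumn_nseq (mulnC a) subnK.
  rewrite all_nseq ab leqnn eqxx orbT !andbT small andbT; apply/andP; split.
    by clear -lo; lia.
  by rewrite -(eqn_modDl (q * a)) subnKC // -mulSnr m_mod.
have b_le_m : b <= m by clear -large; lia.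
have bounds : q * a <= m - b <= q * b by clear -hi large; apply/andP; split; lia.
have mod_rest : m - b = q * a %[mod r].
  by apply/eqP; rewrite -(eqn_modDr b) subnK // -modnDmr ba modnDmr -mulSnr m_mod.
have [s [size_s sum_s all_s]] := IH _ bounds mod_rest.
exists (b :: s); split=> /=; first by rewrite size_s.
  by rewrite sum_s subnKC.
by rewrite all_s leqnn ab ba eqxx.
Qed.

Lemma perm_ord0_type u (d e : nat) :
  perm_eq [seq if i == ord0 then d else e | i <- enum 'I_u.+1] (rcons (nseq u e) d).
Proof.
rewrite perm_sym perm_rcons enum_ordSl /= perm_cons -map_comp.
by rewrite (eq_map (_ : _ \o lift ord0 =1 fun=> e)) // map_const size_enum_ord.
Qed.

Lemma card_sigT_tag (X : finType) (w : X -> nat) (pr : pred X) :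
  #|[set p : {x : X & 'I_(w x)} | pr (tag p)]| = \sum_(x | pr x) w x.
Proof.
rewrite -sum1_card (partition_big (@tag X (fun x => 'I_(w x))) pr); last first.
  by move=> p; rewrite inE.
apply: eq_bigr => x px; rewrite sum1dep_card.
rewrite -[RHS](card_ord (w x)) -(card_imset _ (@eq_from_Tagged _ (fun x => 'I_(w x)) x)).
apply: eq_card => -[y j]; rewrite !inE /=.
apply/andP/imsetP=> [[_ /eqP yx] | [j' _ /(congr1 tag) /= ->]]; first by subst y; exists j.
by rewrite px.
Qed.

Lemma sumn_card_partition (T : finType) (G : {set {set T}}) :
  partition G [set: T] -> sumn [seq #|A| | A : {set T} <- enum G] = #|T|.
Proof.
by move=> partG; rewrite sumnE big_map big_enum -cardsT (card_partition partG).
Qed.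

Definition fibre_sizes (P : finType) (S : {set P}) k (g : P -> 'I_k) : seq nat :=
  [seq #|[set p in S | g p == i]| | i <- enum 'I_k].

Lemma sumn_fibre_sizes (P : finType) (S : {set P}) k (g : P -> 'I_k) :
  sumn (fibre_sizes S g) = #|S|.
Proof.
rewrite sumnE big_map big_enum /= -sum1_card (partition_big g predT) //=.
by apply: eq_bigr => i _; rewrite -sum1dep_card; apply: eq_bigl => p.
Qed.

Lemma fibre_sizes_fst k (Y : finType) :
  fibre_sizes [set: 'I_k * Y] fst = nseq k #|Y|.
Proof.
rewrite -[k in nseq k](size_enum_ord k) -map_const; apply: eq_map => i.
have -> : [set p in [set: 'I_k * Y] | p.1 == i] = setX [set i] [set: Y].
  by apply/setP=> -[a b]; rewrite !inE andbT.
by rewrite cardsX cards1 cardsT mul1n.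
Qed.

Lemma partition_fibre_bij (T P : finType) (G : {set {set T}}) (S : {set P}) k
    (g : P -> 'I_k) :
  partition G [set: T] -> perm_eq (fibre_sizes S g) [seq #|A| | A : {set T} <- enum G] ->
  exists phi : T -> P, [/\ injective phi, phi @: [set: T] = S &
    forall x y, (pblock G x == pblock G y) = (g (phi x) == g (phi y))].
Proof.
move=> partG sizes_eq.
have cardTS : #|T| = #|S|.
  by rewrite -(sumn_fibre_sizes S g) (perm_sumn sizes_eq) sumn_card_partition.
have [p0 _|P_empty] := pickP (@predT P); last first.
  have T_empty (x : T) : False.
    have := max_card (mem S); rewrite -cardTS.
    by rewrite (eq_card0 (A := @predT P)) // (cardD1 x).
  exists (fun x => match T_empty x with end).
  by split=> [x | | x]; [case: T_empty | apply/setP=> p; have := P_empty p | case: T_empty].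
have inG x : pblock G x \in G by rewrite pblock_mem ?(cover_partition partG).
have in_pblock x : x \in pblock G x by rewrite mem_pblock (cover_partition partG).
set fib := fun i => [set p in S | g p == i].
(* Label each group by a fibre of the same size, then map it onto that fibre
   position by position in their enumerations. *)
have [labs perm_labs card_labs] := perm_map_lift sizes_eq.
have size_labs : size labs = size (enum G).
  by rewrite -(size_map (fun i => #|fib i|)) card_labs size_map.
pose lab A := nth (g p0) labs (index A (enum G)).
have card_lab A : A \in G -> #|A| = #|fib (lab A)|.
  move=> GA; have idx : index A (enum G) < size labs by rewrite size_labs index_mem mem_enum.
  have := congr1 (nth 0 ^~ (index A (enum G))) card_labs.
  by rewrite !(nth_map (g p0)) -?size_labs // (nth_map set0) -?size_labs // nth_index ?mem_enum.
have lab_inj : {in G &, injective lab}.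
  move=> A B GA GB /eqP; rewrite /lab nth_uniq ?size_labs ?index_mem ?mem_enum //.
    by move/eqP/index_inj => -> //; rewrite mem_enum.
  by rewrite -(perm_uniq perm_labs) enum_uniq.
pose phi x := nth p0 (enum (fib (lab (pblock G x)))) (index x (enum (pblock G x))).
have idx_fib x : index x (enum (pblock G x)) < size (enum (fib (lab (pblock G x)))).
  by rewrite -cardE -card_lab // cardE index_mem mem_enum.
have phi_fib x : phi x \in fib (lab (pblock G x)) by rewrite -mem_enum mem_nth.
have phiS x : phi x \in S by have := phi_fib x; rewrite inE => /andP [].
have g_phi x : g (phi x) = lab (pblock G x) by have := phi_fib x; rewrite inE => /andP [_ /eqP].
have same_group x y : (pblock G x == pblock G y) = (g (phi x) == g (phi y)).
  by rewrite !g_phi (inj_in_eq lab_inj).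
have phi_inj : injective phi.
  move=> x y phixy; have /eqP Gxy : pblock G x == pblock G y by rewrite same_group phixy.
  move/eqP: phixy; rewrite /phi Gxy nth_uniq ?enum_uniq //; last by rewrite -Gxy.
  by move/eqP; apply: (index_inj x); rewrite mem_enum; [rewrite -Gxy |].
exists phi; split=> //; apply/eqP; rewrite eqEcard card_imset // cardsT cardTS leqnn andbT.
by apply/subsetP=> _ /imsetP [x _ ->].
Qed.

Lemma fibre_partition (T : finType) k (g : T -> 'I_k)
    (G := [set [set x | g x == i] | i : 'I_k]) :
  (forall i, [set x | g x == i] != set0) ->
  [/\ partition G [set: T], forall x y, (pblock G x == pblock G y) = (g x == g y) &
      perm_eq [seq #|A| | A : {set T} <- enum G]
              [seq #|[set x | g x == i]| | i <- enum 'I_k]].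
Proof.
move=> fib_nonempty.
have [trivG fib_inj] : trivIset G /\ {in predT &, injective (fun i => [set x | g x == i])}.
  apply: trivIimset => [i j _ _ ji|].
    rewrite -setI_eq0; apply/eqP/setP=> x; rewrite !inE.
    by apply/negbTE/andP=> [[/eqP gxi /eqP gxj]]; move: ji; rewrite -gxi -gxj eqxx.
  by apply/imsetP=> [[i _ /esym/eqP]]; apply/negP.
have pblockE x : pblock G x = [set y | g y == g x].
  by apply: def_pblock => //; [apply: imset_f | rewrite inE].
split=> [|x y|]; [|by rewrite !pblockE (inj_in_eq fib_inj)|].
- apply/and3P; split=> //; last by apply/imsetP=> [[i _ /esym/eqP]]; apply/negP.
  apply/eqP/setP=> x; rewrite inE; apply/bigcupP.
  by exists [set y | g y == g x]; [apply: imset_f | rewrite inE].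
rewrite (map_comp (fun A : {set T} => #|A|) (fun i => [set x | g x == i])).
apply: perm_map; apply: uniq_perm => [||A]; first exact: enum_uniq.
  by rewrite map_inj_in_uniq ?enum_uniq // => i j _ _; apply: fib_inj.
rewrite mem_enum; apply/imsetP/mapP=> [] [i _ ->]; exists i => //.
by rewrite mem_enum.
Qed.

(* Unlike the groups of a partition, the fibres of g on S may be empty. *)
Definition is_GDD_on (P : finType) (K : pred nat) (S : {set P}) k (g : P -> 'I_k)
    (B : seq {set P}) : Prop :=
  [/\ B != [::], all (fun b : {set P} => (#|b| \in K) && (b \subset S)) B &
      {in S &, forall p p', p != p' ->
        count (fun b : {set P} => (p \in b) && (p' \in b)) B = (g p != g p')}].

Lemma GDD_exists_on (K : pred nat) ty : GDD_exists K ty ->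
  forall (P : finType) (S : {set P}) k (g : P -> 'I_k),
  perm_eq (fibre_sizes S g) ty -> exists B, is_GDD_on K S g B.
Proof.
move=> [n [G [B0 [[partG B0_nil B0_K B0_count] G_ty]]]] P S k g S_ty.
have S_G : perm_eq (fibre_sizes S g) [seq #|A| | A : {set 'I_n} <- enum G].
  by rewrite (perm_trans S_ty) // perm_sym.
have [phi [phi_inj phiT phiG]] := partition_fibre_bij partG S_G.
exists [seq phi @: b | b : {set 'I_n} <- B0]; split.
- by case: (B0) B0_nil.
- apply/allP=> _ /mapP [b bB0 ->]; rewrite card_imset // (allP B0_K _ bB0).
  by rewrite -phiT imsetS ?subsetT.
move=> p p'; rewrite -phiT => /imsetP [x _ ->] /imsetP [y _ ->].
rewrite (inj_eq phi_inj) => xy; rewrite count_map -phiG -B0_count //.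
by apply: eq_count => b /=; rewrite !mem_imset.
Qed.

Lemma GDD_exists_of_GDD_on (K : pred nat) ty (P : finType) k (g : P -> 'I_k)
    (B : seq {set P}) :
  all (leq 1) ty -> is_GDD_on K [set: P] g B -> perm_eq (fibre_sizes [set: P] g) ty ->
  GDD_exists K ty.
Proof.
move=> ty_pos [B_nil B_K B_count] g_ty; pose g' (x : 'I_#|P|) := g (enum_val x).
have card_fib i : #|[set x | g' x == i]| = #|[set p in [set: P] | g p == i]|.
  rewrite -(card_imset _ (@enum_rank_inj P)); apply: eq_card => x.
  rewrite !inE; apply/idP/imsetP=> [g'x | [p + ->]]; last by rewrite !inE /g' enum_rankK.
  by exists (enum_val x); rewrite ?enum_valK // !inE.
have fib_nonempty i : [set x | g' x == i] != set0.
  rewrite -card_gt0 card_fib; apply: (allP ty_pos); rewrite -(perm_mem g_ty).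
  exact: map_f (mem_enum _ i).
have [partG same_group G_sizes] := fibre_partition fib_nonempty.
exists #|P|, [set [set x | g' x == i] | i : 'I_k], [seq enum_rank @: b | b : {set P} <- B].
split; first split=> //.
- by case: (B) B_nil.
- apply/allP=> _ /mapP [b bB ->]; rewrite card_imset; last exact: enum_rank_inj.
  by case/andP: (allP B_K _ bB).
- move=> x y xy; rewrite same_group -B_count ?inE //; last first.
    by apply: contraNneq xy => /enum_val_inj ->.
  rewrite count_map; apply: eq_count => b /=.
  by rewrite -{1}(enum_valK x) -{1}(enum_valK y) !mem_imset //; apply: enum_rank_inj.
apply: perm_trans G_sizes _; apply: perm_trans g_ty.
by rewrite (eq_map card_fib).
Qed.

Lemma is_GDD_on_transversal (P : finType) (K : pred nat) k (g : P -> 'I_k) B b :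
  is_GDD_on K [set: P] g B -> b \in B -> #|b| = k ->
  forall i, exists x, [set y in b | g y == i] = [set x].
Proof.
move=> [_ _ B_count] bB card_b i.
have g_inj : {in b &, injective g}.
  move=> y z yb zb gyz; apply/eqP/negPn/negP => yz.
  have := B_count y z (in_setT _) (in_setT _) yz; rewrite gyz eqxx => /eqP.
  by rewrite eqn0Ngt -has_count => /hasP []; exists b; rewrite ?yb ?zb.
have g_onto : g @: b = [set: 'I_k].
  by apply/eqP; rewrite eqEcard subsetT cardsT card_ord (card_in_imset g_inj) card_b leqnn.
have /imsetP [x xb gx] : i \in g @: b by rewrite g_onto inE.
exists x; apply/setP=> y; rewrite !inE; apply/idP/eqP=> [/andP [yb /eqP gy] | ->].
  by apply: g_inj; rewrite ?gy.
by rewrite xb gx eqxx.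
Qed.

Lemma is_GDD_on_flatten (P0 P : finType) (K0 K : pred nat) k (g0 : P0 -> 'I_k)
    (pi : P -> P0) (BT : seq {set P0}) (Bf : {set P0} -> seq {set P}) :
  is_GDD_on K0 [set: P0] g0 BT ->
  (forall b, b \in BT -> is_GDD_on K [set p | pi p \in b] (g0 \o pi) (Bf b)) ->
  is_GDD_on K [set: P] (g0 \o pi) (flatten [seq Bf b | b <- BT]).
Proof.
move=> [BT_nil _ BT_count] Bf_GDD; split.
- case: BT BT_nil Bf_GDD {BT_count} => [//| b BT _] Bf_GDD /=.
  by have [Bb_nil _ _] := Bf_GDD b (mem_head _ _); case: (Bf b) Bb_nil.
- apply/allP=> c /flattenP [_ /mapP [b bBT ->] cB].
  have [_ /allP Bb_K _] := Bf_GDD b bBT.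
  by case/andP: (Bb_K c cB) => -> _; rewrite subsetT.
move=> p p' _ _ pp' /=; rewrite count_flatten -map_comp.
set both := fun b : {set P0} => (pi p \in b) && (pi p' \in b).
have count_block b : b \in BT ->
    count (fun c : {set P} => (p \in c) && (p' \in c)) (Bf b)
    = both b * (g0 (pi p) != g0 (pi p')).
  move=> bBT; have [_ /allP Bb_K Bb_count] := Bf_GDD b bBT.
  have [/andP [pb p'b] | not_both] := boolP (both b); first by rewrite mul1n Bb_count ?inE.
  rewrite mul0n; apply/eqP; rewrite eqn0Ngt -has_count; apply/hasPn=> c cB.
  apply: contra not_both => /andP [pc p'c]; case/andP: (Bb_K c cB) => _ /subsetP sub.
  by have := sub _ pc; have := sub _ p'c; rewrite /both !inE => -> ->.
rewrite (eq_in_map _ (fun b => both b * (g0 (pi p) != g0 (pi p'))) _).1 //.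
have [g_pp' | g_pp'] := boolP (g0 (pi p) != g0 (pi p')).
  rewrite (eq_map (fun b => muln1 _)) sumn_count BT_count ?inE ?g_pp' //.
  by apply: contraNneq g_pp' => ->.
by rewrite (eq_map (fun b => muln0 (both b))) map_const sumn_nseq.
Qed.

Section WilsonConstruction.

Variables (K : pred nat) (u h : nat) (s : seq nat).

Local Notation q := (size s).
Local Notation P0 := ('I_u.+1 * 'I_q)%type.

Definition inflation_weight (x : P0) : nat := if x.1 == ord0 then nth 0 s x.2 else h.

Local Notation P := {x : P0 & 'I_(inflation_weight x)}.
Local Notation group := (fun p : P => (tag p).1).

Lemma fibre_sizes_inflated_block (b : {set P0}) x0 :
  (forall i, exists x, [set y in b | y.1 == i] = [set x]) -> x0 \in b -> x0.1 = ord0 ->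
  perm_eq (fibre_sizes [set p : P | tag p \in b] group) (rcons (nseq u h) (nth 0 s x0.2)).
Proof.
move=> transv x0b x0_1.
suff /eq_map fibres : (fun i => #|[set p in [set p : P | tag p \in b] | group p == i]|)
    =1 (fun i => if i == ord0 then nth 0 s x0.2 else h).
  by rewrite /fibre_sizes fibres perm_ord0_type.
move=> i /=.
have [x bx] := transv i.
have in_bx y : (y \in b) && (y.1 == i) = (y == x) by rewrite -[y == x]in_set1 -bx inE.
have /andP [xb /eqP x_1] : (x \in b) && (x.1 == i) by rewrite in_bx.
have -> : #|[set p in [set p : P | tag p \in b] | group p == i]| = inflation_weight x.
  rewrite -(big_pred1_eq addn) -(eq_bigl _ _ in_bx) -card_sigT_tag.
  by apply: eq_card => p; rewrite !inE.
rewrite /inflation_weight x_1; case: eqP => // i0; rewrite {}i0 in x_1.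
have [y by0] := transv ord0.
suff [-> ->] : x = y /\ x0 = y by [].
by split; apply/set1P; rewrite -by0 inE ?xb ?x_1 ?x0b ?x0_1 eqxx.
Qed.

Lemma fibre_sizes_inflated :
  perm_eq (fibre_sizes [set: P] group) (rcons (nseq u (h * q)) (sumn s)).
Proof.
suff /eq_map fibres : (fun i => #|[set p in [set: P] | group p == i]|)
    =1 (fun i => if i == ord0 then sumn s else h * q).
  by rewrite /fibre_sizes fibres perm_ord0_type.
move=> i /=.
have -> : #|[set p in [set: P] | group p == i]| = #|[set p : P | (tag p).1 == i]|.
  by apply: eq_card => p; rewrite !inE.
rewrite (card_sigT_tag inflation_weight (fun x : P0 => x.1 == i)).
transitivity (\sum_(a | a == i) \sum_(j < q) inflation_weight (a, j)).
  by rewrite pair_big_dep; apply: eq_big => [[a j]|[a j] _] //=; rewrite andbT.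
rewrite big_pred1_eq /inflation_weight /=; case: eqP => _.
  by rewrite sumnE (big_nth 0) big_mkord.
by rewrite sum_nat_const card_ord mulnC.
Qed.

Lemma wilson_construction :
  0 < h -> 0 < sumn s ->
  GDD_exists (pred1 u.+1) (nseq u.+1 q) ->
  (forall d, d \in s -> GDD_exists K (rcons (nseq u h) d)) ->
  GDD_exists K (rcons (nseq u (h * q)) (sumn s)).
Proof.
move=> h_gt0 sum_gt0 TD ingredient.
have [BT BT_GDD] : exists BT, is_GDD_on (pred1 u.+1) [set: P0] fst BT.
  by apply: (GDD_exists_on TD); rewrite fibre_sizes_fst card_ord.
have block_GDD b : exists Bb,
    b \in BT -> is_GDD_on K [set p : P | tag p \in b] (fst \o tag) Bb.
  have [bBT|] := boolP (b \in BT); last by exists [::].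
  have [_ /allP BT_K _] := BT_GDD.
  have /andP [/eqP card_b _] := BT_K b bBT.
  have transv := is_GDD_on_transversal BT_GDD bBT card_b.
  have [x0 bx0] := transv ord0.
  have : x0 \in [set y in b | y.1 == ord0] by rewrite bx0 set11.
  rewrite inE => /andP [x0b /eqP x0_1].
  have s_x0 : nth 0 s x0.2 \in s by rewrite mem_nth.
  have block_type := fibre_sizes_inflated_block transv x0b x0_1.
  by have [Bb] := GDD_exists_on (ingredient _ s_x0) block_type; exists Bb.
have [Bf Bf_GDD] := functional_choice _ block_GDD.
apply: GDD_exists_of_GDD_on (is_GDD_on_flatten BT_GDD Bf_GDD) fibre_sizes_inflated.
have q_gt0 : 0 < q by case: (s) sum_gt0.
by rewrite all_rcons all_nseq muln_gt0 h_gt0 q_gt0 sum_gt0 orbT.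
Qed.

End WilsonConstruction.

Lemma admissible_range h u dmin :
  h %% 2 = 0 -> u %% 3 = 0 -> admissible h u dmin ->
  [/\ dmin <= h %/ 2 * (u - 1), h %/ 2 * (u - 1) = dmin %[mod 3] &
      forall v, dmin <= v <= h %/ 2 * (u - 1) -> v = dmin %[mod 3] -> admissible h u v].
Proof.
move=> h_even u_mod3 /and3P [dmin_gt0 /eqP dmin_h dmin_le].
set c := h %/ 2.
have h_half : h = 2 * c by rewrite /c; lia.
have h_dmax : h * (u - 1) = 2 * (c * (u - 1)) by rewrite mulnA -h_half.
have u_gt0 : 0 < u by case: u u_mod3 dmin_le {h_dmax} => //; rewrite sub0n muln0; lia.
have u1_mod3 : (u - 1) %% 3 = 2 by lia.
split=> [|| v /andP [dmin_v v_le] v_mod]; first by move: dmin_le; rewrite h_dmax; lia.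
  by rewrite -modnMmr u1_mod3 dmin_h h_half mulnC.
by apply/and3P; split; [lia | rewrite v_mod dmin_h | rewrite h_dmax; lia].
Qed.

Theorem theorem3p3 (h u q : nat) :
  0 < h -> 0 < u -> 0 < q ->
  (h %% 6 == 2) || (h %% 6 == 4) ->
  u %% 3 = 0 -> 6 <= u -> ~~ (3 %| q) ->
  GDD_exists (pred1 u.+1) (nseq u.+1 q) ->
  (forall d, admissible h u d -> GDD_exists (pred1 4) (rcons (nseq u h) d)) ->
  forall dmin : nat, admissible h u dmin ->
  (forall d, admissible h u d -> dmin <= d) ->
  forall m : nat, m = h * q %[mod 3] -> q * dmin <= m -> 2 * m <= q * h * (u - 1) ->
  GDD_exists (pred1 4) (rcons (nseq u (h * q)) m).
Proof.
move=> h_gt0 _ q_gt0 h_mod6 u_mod3 _ _ TD ingredient dmin dmin_adm _ m m_mod lo hi.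
have h_even : h %% 2 = 0 by case/orP: h_mod6 => /eqP; lia.
have [dmin_le dmax_mod in_range] := admissible_range h_even u_mod3 dmin_adm.
have m_range : q * dmin <= m <= q * (h %/ 2 * (u - 1)).
  by rewrite lo /=; move: hi; rewrite {1}(divn_eq h 2) h_even addn0; nia.
have m_mod_dmin : m = q * dmin %[mod 3].
  case/and3P: dmin_adm => _ /eqP dmin_h _.
  by rewrite m_mod -modnMml -dmin_h modnMml mulnC.
have [s [size_s sum_s all_s]] := exists_seq_sumn_mod dmin_le dmax_mod m_range m_mod_dmin.
rewrite -sum_s -size_s; apply: wilson_construction => //.
- by rewrite sum_s (leq_trans _ lo) // muln_gt0 q_gt0; case/andP: dmin_adm.
- by rewrite size_s.
by move=> d /(allP all_s) /andP [d_range /eqP d_mod]; apply/ingredient/in_range.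
Qed.
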